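(* Let $A,B\in\mathbb{R}^{m_1\times m_2}$ and $a>0$. Then $$\mathrm{TL1}_a\big(A+P_A^\perp(B)\big)=\mathrm{TL1}_a(A)+\mathrm{TL1}_a\big(P_A^\perp(B)\big).$$
   Context: For $a>0$ and a matrix $X\in\mathbb{R}^{m_1\times m_2}$ with singular values $\sigma_1(X)\ge\dots\ge\sigma_m(X)$, $m=\min\{m_1,m_2\}$, define $\mathrm{TL1}_a(X)=\sum_{j=1}^m\frac{(a+1)\sigma_j(X)}{a+\sigma_j(X)}$. For $A$ with SVD $A=U_AD_AV_A^\top$ (compact, over the nonzero singular values), let $S_U(A)$, $S_V(A)$ be the linear subspaces spanned by the columns of $U_A$, $V_A$, and $S_U^\perp(A)$, $S_V^\perp(A)$ their orthogonal complements. With $\mathbf{P}_S$ the orthogonal projection onto a subspace $S$, define $P_A^\perp(B)=\mathbf{P}_{S_U^\perp(A)}\,B\,\mathbf{P}_{S_V^\perp(A)}$. *)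

From HB Require Import structures.
From mathcomp Require Import all_boot all_order all_algebra.
From mathcomp Require Import boolp classical_sets reals.
Set Implicit Arguments. Unset Strict Implicit. Unset Printing Implicit Defensive.
Import Order.TTheory GRing.Theory Num.Theory.
Local Open Scope ring_scope.
Local Open Scope classical_set_scope.

Section Defs.
Variable R : realType.

Definition orthogonalmx n (U : 'M[R]_n) : Prop := U *m U^T = 1%:M.

Definition rdiag m1 m2 (s : seq R) : 'M[R]_(m1, m2) :=
  \matrix_(i < m1, j < m2) (if (i : nat) == j then s`_i else 0).

Definition is_svals m1 m2 (X : 'M[R]_(m1, m2)) (s : seq R) : Prop :=
  [/\ size s = minn m1 m2, sorted (fun x y => y <= x) s, all (fun x => 0 <= x) s
    & exists (U : 'M[R]_m1) (V : 'M[R]_m2),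
        [/\ orthogonalmx U, orthogonalmx V & X = U *m rdiag m1 m2 s *m V^T]].

Definition svals m1 m2 (X : 'M[R]_(m1, m2)) : seq R :=
  xget [::] [set s | is_svals X s].

Definition sigma m1 m2 (X : 'M[R]_(m1, m2)) (j : nat) : R := (svals X)`_j.

Definition TL1 (a : R) m1 m2 (X : 'M[R]_(m1, m2)) : R :=
  \sum_(j < minn m1 m2) ((a + 1) * sigma X j / (a + sigma X j)).

(* orthogonal projection (acting on column vectors x |-> P x) onto the
   subspace S of R^n spanned by the rows of W (a symmetric idempotent
   matrix with range S). *)
Definition orthoproj k n (W : 'M[R]_(k, n)) : 'M[R]_n :=
  xget 0 [set P : 'M[R]_n | [/\ P^T = P, P *m P = P & (P == W)%MS]].

(* S_U^perp(A): orthogonal complement of the column space of A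
   = span of the columns of U_A; as row space: rows u with u *m A = 0. *)
Definition SUperp m1 m2 (A : 'M[R]_(m1, m2)) : 'M[R]_m1 := kermx A.
(* S_V^perp(A): orthogonal complement of the row space of A
   = span of the columns of V_A. *)
Definition SVperp m1 m2 (A : 'M[R]_(m1, m2)) : 'M[R]_m2 := kermx A^T.

Definition Pperp m1 m2 (A B : 'M[R]_(m1, m2)) : 'M[R]_(m1, m2) :=
  orthoproj (SUperp A) *m B *m orthoproj (SVperp A).

End Defs.

From mathcomp Require Import all_boot all_order all_algebra.
From mathcomp Require Import boolp classical_sets reals.
From mathcomp Require Import topology normedtype derive.
From mathcomp Require Import ring lra.
Import Order.TTheory GRing.Theory Num.Theory.
Local Open Scope ring_scope.
Set Implicit Arguments. Unset Strict Implicit. Unset Printing Implicit Defensive.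

(* Write C = P_A^perp(B). The projections kill the column and row spaces of A,
   so A^T C = 0 and A C^T = 0; hence the Gram matrices A A^T and C C^T
   annihilate each other and ((A + C)(A + C)^T)^k = (A A^T)^k + (C C^T)^k for
   k >= 1. Taking traces, sum_j sigma_j(X)^(2k) is additive on A, C, A + C, and
   so is sum_j q(sigma_j(X)^2) for any polynomial q with q(0) = 0. It remains
   to take for q a polynomial interpolating y |-> (a+1) sqrt y / (a + sqrt y)
   at the finitely many squared singular values involved.
   Since singular values are defined by choice, an SVD must also be shown to
   exist. This is done by induction on the size: a unit vector v maximising
   |X v| (compactness of the sphere) is an eigenvector of X^T X, and two
   Householder reflections moving v and X v / |X v| to the first basis vectors
   split off the largest singular value. *)

Section Euclidean.
Variable R : realFieldType.

Definition sqnorm n (w : 'rV[R]_n) : R := (w *m w^T) 0 0.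

Lemma sqnormE n (w : 'rV[R]_n) : sqnorm w = \sum_j w 0 j ^+ 2.
Proof. by rewrite /sqnorm mxE; apply: eq_bigr => j _; rewrite mxE expr2. Qed.

Lemma sqnorm_ge0 n (w : 'rV[R]_n) : 0 <= sqnorm w.
Proof. by rewrite sqnormE sumr_ge0 // => j _; rewrite sqr_ge0. Qed.

Lemma sqnorm_eq0 n (w : 'rV[R]_n) : (sqnorm w == 0) = (w == 0).
Proof.
apply/idP/eqP => [|->]; last by rewrite sqnormE big1 // => j _; rewrite mxE expr0n.
rewrite sqnormE psumr_eq0 => [/allP w0|j _]; last exact: sqr_ge0.
by apply/rowP => j; apply/eqP; rewrite mxE -sqrf_eq0; exact: w0 (mem_index_enum j).
Qed.

Lemma sqnorm0 n : sqnorm (0 : 'rV[R]_n) = 0.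
Proof. by apply/eqP; rewrite sqnorm_eq0. Qed.

Lemma sqnormZ n c (w : 'rV[R]_n) : sqnorm (c *: w) = c ^+ 2 * sqnorm w.
Proof. by rewrite !sqnormE mulr_sumr; apply: eq_bigr => j _; rewrite mxE exprMn. Qed.

Lemma sqnorm_row_mx n1 n2 (u : 'rV[R]_n1) (v : 'rV[R]_n2) :
  sqnorm (row_mx u v) = sqnorm u + sqnorm v.
Proof. by rewrite /sqnorm tr_row_mx mul_row_col mxE. Qed.

Lemma sqnorm_delta n (j : 'I_n) : sqnorm ('e_j : 'rV[R]_n) = 1.
Proof. by rewrite /sqnorm -rowE !mxE !eqxx. Qed.

Lemma sqnorm_mulmx_orthonormal n k (w : 'rV[R]_n) (U : 'M[R]_(n, k)) :
  U *m U^T = 1%:M -> sqnorm (w *m U) = sqnorm w.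
Proof. by move=> UU; rewrite /sqnorm trmx_mul mulmxA -(mulmxA w) UU mulmx1. Qed.

Lemma sqnormB n (u v : 'rV[R]_n) :
  sqnorm (u - v) = sqnorm u + sqnorm v - 2 * (u *m v^T) 0 0.
Proof.
rewrite !sqnormE mxE -big_split mulr_sumr -sumrB /=.
by apply: eq_bigr => j _; rewrite !mxE; ring.
Qed.

Lemma usubmx1 n : usubmx (1%:M : 'M[R]_(1 + n)) = row_mx 1%:M 0.
Proof. by rewrite (scalar_mx_block 1 n) block_mxEv col_mxKu. Qed.

Definition reflectmx n (w : 'rV[R]_n) : 'M[R]_n :=
  1%:M - (2 / sqnorm w) *: (w^T *m w).

Lemma trmx_reflectmx n (w : 'rV[R]_n) : (reflectmx w)^T = reflectmx w.
Proof. by rewrite /reflectmx linearB /= linearZ /= trmx1 trmx_mul trmxK. Qed.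

Lemma mul_reflectmx n (u w : 'rV[R]_n) :
  u *m reflectmx w = u - (2 * (u *m w^T) 0 0 / sqnorm w) *: w.
Proof.
rewrite /reflectmx mulmxBr mulmx1 -scalemxAr mulmxA {1}[u *m w^T]mx11_scalar.
by rewrite mul_scalar_mx scalerA mulrAC.
Qed.

Lemma reflectmx_orthonormal n (w : 'rV[R]_n) : w != 0 ->
  reflectmx w *m (reflectmx w)^T = 1%:M.
Proof.
rewrite -sqnorm_eq0 => w0; rewrite trmx_reflectmx /reflectmx.
set P := w^T *m w; set c := 2 / sqnorm w.
have PP : P *m P = sqnorm w *: P.
  by rewrite mulmxA -(mulmxA w^T) [w *m w^T]mx11_scalar mul_mx_scalar -scalemxAl.
rewrite mulmxBl mul1mx mulmxBr mulmx1 -scalemxAl -scalemxAr PP !scalerA.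
have -> : c * c * sqnorm w = c + c by rewrite -mulrA /c divfK // mulr_natr mulr2n.
by rewrite scalerDl opprB addrK subrK.
Qed.

Lemma orthonormal_completion n (v : 'rV[R]_(1 + n)) : sqnorm v = 1 ->
  exists H : 'M[R]_(1 + n), H *m H^T = 1%:M /\ usubmx H = v.
Proof.
move=> v1; set e : 'rV[R]_(1 + n) := usubmx 1%:M.
have [->|ve] := eqVneq v e; first by exists 1%:M; rewrite trmx1 mulmx1.
have e1 : sqnorm e = 1.
  by rewrite /e usubmx1 sqnorm_row_mx sqnorm0 addr0 /sqnorm trmx1 mulmx1 mxE.
(* The reflection in the hyperplane orthogonal to e - v exchanges e and v. *)
pose w := e - v; have w0 : w != 0 by rewrite subr_eq0 eq_sym.
exists (reflectmx w); split; first exact: reflectmx_orthonormal.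
rewrite -[reflectmx w]mul1mx -mul_usub_mx -/e mul_reflectmx.
have ew : (e *m w^T) 0 0 = 1 - (e *m v^T) 0 0.
  by rewrite /w linearB mulmxBr mxE [X in _ + X]mxE; congr (_ - _); exact: e1.
have -> : 2 * (e *m w^T) 0 0 = sqnorm w by rewrite ew sqnormB e1 v1; ring.
by rewrite mulfV ?sqnorm_eq0 // scale1r opprB addrC subrK.
Qed.

Definition gram_form m n (X : 'M[R]_(m, n)) (w : 'rV[R]_n) : R := sqnorm (w *m X^T).

Lemma gram_formE m n (X : 'M[R]_(m, n)) w :
  gram_form X w = (w *m (X^T *m X) *m w^T) 0 0.
Proof. by rewrite /gram_form /sqnorm trmx_mul trmxK !mulmxA. Qed.

Lemma gram_formZ m n (X : 'M[R]_(m, n)) c w :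
  gram_form X (c *: w) = c ^+ 2 * gram_form X w.
Proof. by rewrite /gram_form -scalemxAl sqnormZ. Qed.

Lemma psd_null_vector n (M : 'M[R]_n) (v : 'rV[R]_n) : M^T = M ->
  (forall w : 'rV_n, 0 <= (w *m M *m w^T) 0 0) -> (v *m M *m v^T) 0 0 = 0 ->
  v *m M = 0.
Proof.
(* Along v - t y the form is t^2 q - 2 t |y|^2; at t = |y|^2 / (q + 1) this
   is -t^2 (q + 2), which forces t = 0. *)
move=> MT M_psd vMv; set y := v *m M; set q := (y *m M *m y^T) 0 0.
have Q_expand t : ((v - t *: y) *m M *m (v - t *: y)^T) 0 0 =
    t ^+ 2 * q - 2 * t * sqnorm y.
  have My : M *m v^T = y^T by rewrite -[M in LHS]MT -trmx_mul.
  have -> : (v - t *: y)^T = v^T - t *: y^T by rewrite linearB linearZ.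
  rewrite mulmxBl -scalemxAl -/y mulmxBl !mulmxBr -!scalemxAl -!scalemxAr.
  rewrite -(mulmxA y M v^T) My -!trace_mx11 !linearB /= !linearZ /= !trace_mx11.
  by rewrite [(y *m v^T) 0 0]vMv /sqnorm -/q; ring.
have q_ge0 : 0 <= q := M_psd y.
have y_ge0 := sqnorm_ge0 y.
pose t := sqnorm y / (q + 1).
have t_def : t * (q + 1) = sqnorm y by rewrite divfK // gt_eqF // ltr_pwDr.
have := M_psd (v - t *: y); rewrite Q_expand => Q_ge0.
have t0 : t = 0 by nra.
by apply/eqP; rewrite -sqnorm_eq0 -t_def t0 mul0r.
Qed.

Lemma gram_form_max_eigen m n (X : 'M[R]_(m, n)) v : sqnorm v = 1 ->
  (forall w, gram_form X w <= gram_form X v * sqnorm w) ->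
  v *m (X^T *m X) = gram_form X v *: v.
Proof.
move=> v1 v_max; set l := gram_form X v; set M := l%:M - X^T *m X.
have M_form w : (w *m M *m w^T) 0 0 = l * sqnorm w - gram_form X w.
  rewrite mulmxBr mul_mx_scalar mulmxBl -scalemxAl -trace_mx11 linearB /=.
  by rewrite linearZ /= !trace_mx11 gram_formE.
have MT : M^T = M by rewrite linearB /= tr_scalar_mx trmx_mul trmxK.
have /psd_null_vector : (v *m M *m v^T) 0 0 = 0 by rewrite M_form v1 mulr1 subrr.
move=> /(_ MT) vM0; apply/esym/eqP; rewrite -subr_eq0 -mul_mx_scalar -mulmxBr.
by apply/eqP/vM0 => w; rewrite M_form subr_ge0 v_max.
Qed.

End Euclidean.

Import numFieldTopology.Exports numFieldNormedType.Exports.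

Section SVD.
Variable R : realType.

Lemma gram_form_continuous m n (X : 'M[R]_(m, n)) : continuous (gram_form X).
Proof.
have entry_cont i : continuous (fun w : 'rV[R]_n => (w *m X^T) 0 i).
  have -> : (fun w : 'rV[R]_n => (w *m X^T) 0 i) = fun w => \sum_j w 0 j * X^T j i.
    by apply/funext => w; rewrite mxE.
  apply: continuous_big; first exact: add_continuous.
  by move=> j _ w; apply: continuousM; [exact: coord_continuous | exact: cst_continuous].
have -> : gram_form X = fun w => \sum_i (w *m X^T) 0 i * (w *m X^T) 0 i.
  by apply/funext => w; rewrite /gram_form sqnormE; apply: eq_bigr => i _; rewrite expr2.
apply: continuous_big; first exact: add_continuous.
by move=> i _ w; apply: continuousM; exact: entry_cont.
Qed.

Lemma sqnorm_continuous n : continuous (@sqnorm R n).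
Proof.
have -> : @sqnorm R n = gram_form 1%:M.
  by apply/funext => w; rewrite /gram_form trmx1 mulmx1.
exact: gram_form_continuous.
Qed.

Lemma unit_sphere_compact n : compact [set w : 'rV[R]_n | sqnorm w = 1].
Proof.
have sphere_closed : closed [set w : 'rV[R]_n | sqnorm w = 1].
  apply: (@preimage_closed _ _ _ [set x : R | x = 1]); last exact: closed_eq.
  by move=> w _; exact: sqnorm_continuous.
have box_compact := @rV_compact R n (fun=> `[-1, 1]%classic)
  (fun=> @segment_compact R (-1) 1).
apply: subclosed_compact sphere_closed box_compact _.
move=> w /= w1 j; rewrite in_itv /=.
have : w 0 j ^+ 2 <= 1.
  by rewrite -w1 sqnormE (bigD1 j) //= lerDl sumr_ge0 // => k _; exact: sqr_ge0.
by move=> wj; apply/andP; split; nra.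
Qed.

Lemma exists_gram_form_max m n (X : 'M[R]_(m, n.+1)) :
  exists2 v, sqnorm v = 1 & forall w, gram_form X w <= gram_form X v * sqnorm w.
Proof.
have sphere0 : ([set w : 'rV[R]_n.+1 | sqnorm w = 1] !=set0)%classic.
  by exists 'e_0; exact: sqnorm_delta.
have [v /set_mem v1 v_max] := EVT_max_rV sphere0 (@unit_sphere_compact n.+1)
  (continuous_subspaceT (@gram_form_continuous _ _ X)).
exists v => // w; have [->|w0] := eqVneq w 0.
  by rewrite sqnorm0 mulr0 /gram_form mul0mx sqnorm0.
have w_gt0 : 0 < sqnorm w by rewrite lt_def sqnorm_eq0 w0 sqnorm_ge0.
set t := Num.sqrt (sqnorm w).
have t2 : t ^+ 2 = sqnorm w by rewrite sqr_sqrtr // ltW.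
have /mem_set/v_max : sqnorm (t^-1 *: w) = 1.
  by rewrite sqnormZ exprVn t2 mulVf // gt_eqF.
by rewrite gram_formZ exprVn t2 mulrC ler_pdivrMr.
Qed.

Lemma orthogonalmx_tmul n (U : 'M[R]_n) : orthogonalmx U -> U^T *m U = 1%:M.
Proof. exact: mulmx1C. Qed.

Lemma orthogonalmx_tr n (U : 'M[R]_n) : orthogonalmx U -> orthogonalmx U^T.
Proof. by move=> /orthogonalmx_tmul; rewrite /orthogonalmx trmxK. Qed.

Lemma orthogonalmx1 n : orthogonalmx (1%:M : 'M[R]_n).
Proof. by rewrite /orthogonalmx trmx1 mulmx1. Qed.

Lemma orthogonalmx_mul n (U V : 'M[R]_n) :
  orthogonalmx U -> orthogonalmx V -> orthogonalmx (U *m V).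
Proof. by move=> oU oV; rewrite /orthogonalmx trmx_mul mulmxA -(mulmxA U) oV mulmx1. Qed.

Lemma orthogonalmx_block n (U : 'M[R]_n) :
  orthogonalmx U -> orthogonalmx (block_mx (1%:M : 'M_1) 0 0 U).
Proof.
move=> oU; rewrite /orthogonalmx tr_block_mx !trmx0 trmx1 mulmx_block.
by rewrite !mulmx0 !mul0mx !addr0 !add0r mulmx1 oU -scalar_mx_block.
Qed.

Lemma gram_form_orthogonal_conj m n (U : 'M[R]_m) (V : 'M[R]_n) D w :
  orthogonalmx U -> orthogonalmx V ->
  gram_form (U *m D *m V^T) (w *m V^T) = gram_form D w.
Proof.
move=> oU oV; rewrite /gram_form !trmx_mul trmxK !mulmxA -(mulmxA w).
rewrite orthogonalmx_tmul // mulmx1 sqnorm_mulmx_orthonormal //.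
by rewrite trmxK orthogonalmx_tmul.
Qed.

Lemma gram_form_block p q c (Y : 'M[R]_(p, q)) w :
  gram_form (block_mx c%:M 0 0 Y) (row_mx (0 : 'rV_1) w) = gram_form Y w.
Proof.
rewrite /gram_form tr_block_mx !trmx0 mul_row_block !mulmx0 !mul0mx !addr0 add0r.
by rewrite sqnorm_row_mx sqnorm0 add0r.
Qed.

Lemma gram_form_rdiag p q (s : seq R) k (kp : (k < p)%N) (kq : (k < q)%N) :
  gram_form (rdiag p q s) 'e_(Ordinal kq) = s`_k ^+ 2.
Proof.
rewrite /gram_form -rowE sqnormE (bigD1 (Ordinal kp)) //= big1 => [|i ik].
  by rewrite !mxE eqxx addr0.
by rewrite !mxE; case: eqP => [ki|_]; [case/eqP: ik; apply: val_inj | rewrite expr0n].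
Qed.

Lemma rdiag_cons p q x (s : seq R) :
  rdiag (1 + p) (1 + q) (x :: s) = block_mx x%:M 0 0 (rdiag p q s).
Proof.
apply/matrixP => i j; rewrite !mxE.
case: (splitP i) => i' ->; rewrite !mxE; case: (splitP j) => j' ->; rewrite !mxE.
- by rewrite (ord1 i') (ord1 j') mulr1n.
- by rewrite (ord1 i').
- by rewrite (ord1 j').
- by rewrite /= !add1n eqSS.
Qed.

Lemma is_svals0 m1 m2 : is_svals (0 : 'M[R]_(m1, m2)) (nseq (minn m1 m2) 0).
Proof.
split; first by rewrite size_nseq.
- by elim: (minn m1 m2) => // -[|k] //= ->; rewrite lexx.
- by apply/allP => x /nseqP[->].
exists 1%:M, 1%:M; split; try exact: orthogonalmx1.
by rewrite trmx1 mulmx1 mul1mx; apply/matrixP => i j; rewrite !mxE nth_nseq !if_same.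
Qed.

Lemma svals_sq_le m n (Y : 'M[R]_(m, n)) s l : is_svals Y s ->
  (forall w, gram_form Y w <= l * sqnorm w) -> {in s, forall x, x ^+ 2 <= l}.
Proof.
case=> s_size _ _ [U [V [oU oV ->]]] Y_le _ /(nthP 0)[k ks <-].
have kmin : (k < minn m n)%N by rewrite -s_size.
have km : (k < m)%N by rewrite (leq_trans kmin) ?geq_minl.
have kn : (k < n)%N by rewrite (leq_trans kmin) ?geq_minr.
have := Y_le ('e_(Ordinal kn) *m V^T).
rewrite gram_form_orthogonal_conj // (gram_form_rdiag _ km).
by rewrite (sqnorm_mulmx_orthonormal _ (orthogonalmx_tr oV)) sqnorm_delta mulr1.
Qed.

Lemma exists_top_singular_pair m n (X : 'M[R]_(m, n.+1)) : X != 0 ->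
  exists2 sg, 0 < sg & exists u v, [/\ sqnorm u = 1, sqnorm v = 1,
    u *m X = sg *: v, v *m X^T = sg *: u
    & forall w, gram_form X w <= sg ^+ 2 * sqnorm w].
Proof.
move=> X0; have [v v1 v_max] := exists_gram_form_max X.
have v_eigen := gram_form_max_eigen v1 v_max.
set l := gram_form X v in v_max v_eigen.
have l_gt0 : 0 < l.
  rewrite lt_def sqnorm_ge0 andbT; apply: contraNneq X0 => l0.
  rewrite -trmx_eq0; apply/eqP/row_matrixP => j; rewrite row0 rowE.
  apply/eqP; rewrite -sqnorm_eq0 eq_le sqnorm_ge0 andbT.
  by have := v_max 'e_j; rewrite l0 mul0r.
set sg := Num.sqrt l; have sg_gt0 : 0 < sg by rewrite sqrtr_gt0.
have sg2 : sg ^+ 2 = l by rewrite sqr_sqrtr // ltW.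
exists sg => //; exists (sg^-1 *: (v *m X^T)), v; split => //.
- by rewrite sqnormZ exprVn sg2 mulVf ?gt_eqF.
- by rewrite -scalemxAl -mulmxA v_eigen scalerA -sg2 expr2 mulKf ?gt_eqF.
- by rewrite scalerA mulfV ?gt_eqF // scale1r.
- by move=> w; rewrite sg2.
Qed.

Lemma usubmx_mul_trmx p q m n (K1 : 'M[R]_(1 + p, m)) (Y : 'M[R]_(m, n))
    (K2 : 'M[R]_(1 + q, n)) c :
  K2 *m K2^T = 1%:M -> usubmx K1 *m Y = c *: usubmx K2 ->
  usubmx (K1 *m Y *m K2^T) = row_mx c%:M 0.
Proof.
move=> K2K K1Y; rewrite -!mul_usub_mx K1Y -scalemxAl mul_usub_mx K2K usubmx1.
by rewrite scale_row_mx scaler0 scalemx1.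
Qed.

Lemma block_mx_first_row_col p q c (Z : 'M[R]_(1 + p, 1 + q)) :
  usubmx Z = row_mx c%:M 0 -> usubmx Z^T = row_mx c%:M 0 ->
  Z = block_mx c%:M 0 0 (drsubmx Z).
Proof.
move=> Z_row Z_col; rewrite -{1}(submxK Z); congr block_mx.
- by rewrite /ulsubmx Z_row row_mxKl.
- by rewrite /ursubmx Z_row row_mxKr.
- by rewrite -[Z]trmxK -trmx_ursub /ursubmx Z_col row_mxKr trmx0.
Qed.

Lemma svd_deflation p q (X : 'M[R]_(1 + p, 1 + q)) : X != 0 ->
  exists2 sg, 0 < sg & exists (Y : 'M[R]_(p, q)) H1 H2,
    [/\ orthogonalmx H1, orthogonalmx H2, X = H1^T *m block_mx sg%:M 0 0 Y *m H2
      & forall w, gram_form Y w <= sg ^+ 2 * sqnorm w].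
Proof.
move=> X0; have [sg sg_gt0 [u [v [u1 v1 uX vXt X_le]]]] := exists_top_singular_pair X0.
have [H1 [oH1 H1u]] := orthonormal_completion u1.
have [H2 [oH2 H2v]] := orthonormal_completion v1.
pose Z := H1 *m X *m H2^T.
have ZE : Z = block_mx sg%:M 0 0 (drsubmx Z).
  apply: block_mx_first_row_col; first by apply: usubmx_mul_trmx; rewrite ?H1u ?H2v.
  by rewrite /Z !trmx_mul trmxK mulmxA; apply: usubmx_mul_trmx; rewrite ?H1u ?H2v.
have XE : X = H1^T *m Z *m H2.
  by rewrite /Z !mulmxA orthogonalmx_tmul // mul1mx -mulmxA orthogonalmx_tmul // mulmx1.
exists sg => //; exists (drsubmx Z), H1, H2; split => //; first by rewrite -ZE.
move=> w; have := X_le (row_mx 0 w *m H2).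
rewrite (sqnorm_mulmx_orthonormal _ oH2) sqnorm_row_mx sqnorm0 add0r.
have [oH1t oH2t] := (orthogonalmx_tr oH1, orthogonalmx_tr oH2).
by rewrite {1}XE -[H2]trmxK gram_form_orthogonal_conj // {1}ZE gram_form_block.
Qed.

Lemma block_mx_conj_diag1 p q c (U : 'M[R]_p) (V : 'M[R]_q) (D : 'M[R]_(p, q)) :
  block_mx c%:M 0 0 (U *m D *m V^T) =
  block_mx (1%:M : 'M_1) 0 0 U *m block_mx c%:M 0 0 D *m (block_mx 1%:M 0 0 V)^T.
Proof.
rewrite tr_block_mx !trmx0 trmx1 !mulmx_block.
by rewrite !(mulmx0, mul0mx, addr0, add0r, mul1mx, mulmx1).
Qed.

Lemma is_svals_exists m1 m2 (X : 'M[R]_(m1, m2)) : exists s, is_svals X s.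
Proof.
elim: m1 m2 X => [|p IH] m2 X; have [->|X0] := eqVneq X 0;
  try by eexists; exact: is_svals0.
  by rewrite [X]flatmx0 eqxx in X0.
case: m2 X X0 => [|q] X X0; first by rewrite [X]thinmx0 eqxx in X0.
have [sg sg_gt0 [Y [H1 [H2 [oH1 oH2 -> Y_le]]]]] := svd_deflation X0.
have [s Ys] := IH q Y; have s_le_sg := svals_sq_le Ys Y_le.
case: Ys => s_size s_sorted s_ge0 [U [V [oU oV ->]]].
exists (sg :: s); split.
- by rewrite /= s_size minnSS.
- rewrite /= path_sortedE => [|? ? ? xy yz]; last exact: le_trans yz xy.
  rewrite s_sorted andbT; apply/allP => x xs.
  have := s_le_sg x xs; have := allP s_ge0 x xs; nra.
- by rewrite /= s_ge0 ltW.
exists (H1^T *m block_mx 1%:M 0 0 U), (H2^T *m block_mx 1%:M 0 0 V).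
split; try by apply: orthogonalmx_mul;
  [exact: orthogonalmx_tr | exact: orthogonalmx_block].
by rewrite rdiag_cons block_mx_conj_diag1 trmx_mul trmxK !mulmxA.
Qed.

Lemma svalsP m1 m2 (X : 'M[R]_(m1, m2)) : is_svals X (svals X).
Proof. exact: xgetPex (is_svals_exists X). Qed.

End SVD.

Section RingPowers.
Variable T : pzRingType.

Lemma expr_conj (u u' d : T) k : u * u' = 1 -> u' * u = 1 ->
  (u * d * u') ^+ k = u * d ^+ k * u'.
Proof.
move=> uu' u'u; elim: k => [|k IH]; first by rewrite !expr0 mulr1.
by rewrite exprS IH [d ^+ k.+1]exprS !mulrA -(mulrA (u * d) u') u'u mulr1.
Qed.

Lemma exprDn_annihilating (x y : T) k : x * y = 0 -> y * x = 0 ->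
  (x + y) ^+ k.+1 = x ^+ k.+1 + y ^+ k.+1.
Proof.
move=> xy yx; elim: k => [|k IH]; first by rewrite !expr1.
rewrite [(x + y) ^+ k.+2]exprS IH mulrDl !mulrDr !exprS !mulrA xy yx !mul0r.
by rewrite addr0 add0r.
Qed.

Lemma expr_diag_mx n (d : 'rV[T]_n) k : diag_mx d ^+ k = diag_mx (\row_i d 0 i ^+ k).
Proof.
elim: k => [|k IH].
  by rewrite expr0 -idmxE -diag_const_mx; congr diag_mx; apply/rowP => i; rewrite !mxE.
rewrite exprS IH -mulmxE mulmx_diag; congr diag_mx.
by apply/rowP => i; rewrite !mxE exprS.
Qed.

End RingPowers.

Section SingularValueSums.
Variable R : realType.

Lemma rdiag_mul_tr m1 m2 (s : seq R) : (size s <= minn m1 m2)%N ->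
  rdiag m1 m2 s *m (rdiag m1 m2 s)^T = diag_mx (\row_i s`_i ^+ 2).
Proof.
move=> s_size; apply/matrixP => i k; rewrite !mxE.
have [im2|m2i] := ltnP i m2.
  rewrite (bigD1 (Ordinal im2)) //= big1 => [|j ji]; last first.
    rewrite !mxE; case: eqP => [ij|_]; last by rewrite mul0r.
    by case/eqP: ji; apply: val_inj.
  rewrite !mxE eqxx addr0 (eq_sym (k : nat)) -(inj_eq val_inj) /=.
  by case: eqP => [->|_]; rewrite ?mulr1n ?mulr0n ?mulr0 // expr2.
have -> : s`_i = 0.
  by rewrite nth_default // (leq_trans s_size) // (leq_trans (geq_minr _ _)).
rewrite expr0n mul0rn big1 // => j _; rewrite !mxE.
by rewrite (_ : _ == _ = false) ?mul0r // gtn_eqF // (leq_trans (ltn_ord j)).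
Qed.

Lemma mxtrace_gram_expr m1 m2 (X : 'M[R]_(m1, m2)) s k : is_svals X s ->
  \tr ((X *m X^T) ^+ k) = \sum_(i < m1) (s`_i ^+ 2) ^+ k.
Proof.
case=> s_size _ _ [U [V [oU oV ->]]].
have UUt : U * U^T = 1 by rewrite -mulmxE -idmxE.
have UtU : U^T * U = 1 by rewrite -mulmxE -idmxE orthogonalmx_tmul.
have -> : U *m rdiag m1 m2 s *m V^T *m (U *m rdiag m1 m2 s *m V^T)^T =
    U * diag_mx (\row_i s`_i ^+ 2) * U^T.
  rewrite -!mulmxE !trmx_mul trmxK !mulmxA -(mulmxA _ V^T) orthogonalmx_tmul //.
  by rewrite mulmx1 -(mulmxA U) rdiag_mul_tr ?s_size.
rewrite expr_conj // -!mulmxE mxtrace_mulC mulmxA orthogonalmx_tmul // mul1mx.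
by rewrite expr_diag_mx mxtrace_diag; apply: eq_bigr => i _; rewrite !mxE.
Qed.

Lemma sum_svals_poly m1 m2 (X : 'M[R]_(m1, m2)) s (q : {poly R}) :
  is_svals X s -> q.[0] = 0 ->
  \sum_(j < minn m1 m2) q.[s`_j ^+ 2] =
  \sum_(k < size q) q`_k * \tr ((X *m X^T) ^+ k).
Proof.
move=> Xs q0; under [RHS]eq_bigr do rewrite (mxtrace_gram_expr _ Xs) mulr_sumr.
rewrite exchange_big /=; under [RHS]eq_bigr do rewrite -horner_coef.
rewrite (big_ord_widen m1 (fun j => q.[s`_j ^+ 2])) ?geq_minl //.
rewrite [RHS](bigID (fun i : 'I_m1 => (i < minn m1 m2)%N)) /=.
rewrite [X in _ = _ + X]big1 ?addr0 //.
move=> i; rewrite -leqNgt => i_ge; case: Xs => s_size _ _ _.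
by rewrite nth_default ?s_size // expr0n.
Qed.

End SingularValueSums.

Lemma exists_interpolating_poly (F : fieldType) (ys : seq F) (G : F -> F) :
  exists q : {poly F}, {in ys, forall y, q.[y] = G y}.
Proof.
elim: ys => [|y ys [q q_ys]]; first by exists 0.
have [y_ys|y_new] := boolP (y \in ys).
  by exists q => z; rewrite inE => /predU1P[->|]; exact: q_ys.
pose P := \prod_(z <- ys) ('X - z%:P).
have P_ys z : z \in ys -> P.[z] = 0.
  move=> z_ys; apply/eqP; rewrite horner_prod prodf_seq_eq0.
  by apply/hasP; exists z => //=; rewrite hornerXsubC subrr.
have Py : P.[y] != 0.
  rewrite horner_prod prodf_seq_neq0; apply/allP => z z_ys /=.
  by rewrite hornerXsubC subr_eq0; apply: contraNneq y_new => ->.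
exists (q + ((G y - q.[y]) / P.[y]) *: P) => z; rewrite inE hornerD hornerZ.
case/predU1P => [->|z_ys]; first by rewrite divfK // addrC subrK.
by rewrite (P_ys z z_ys) mulr0 addr0 q_ys.
Qed.

Section TL1Additivity.
Variable R : realType.

Lemma TL1_trace_poly a m1 m2 (X : 'M[R]_(m1, m2)) (q : {poly R}) : q.[0] = 0 ->
  {in svals X, forall x, q.[x ^+ 2] = (a + 1) * x / (a + x)} ->
  TL1 a X = \sum_(k < size q) q`_k * \tr ((X *m X^T) ^+ k).
Proof.
move=> q0 q_svals; rewrite -(sum_svals_poly (svalsP X) q0).
apply: eq_bigr => j _; rewrite q_svals // mem_nth //.
by case: (svalsP X) => ->.
Qed.

Lemma trmx_orthoproj k n (W : 'M[R]_(k, n)) : (orthoproj W)^T = orthoproj W.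
Proof. by rewrite /orthoproj; case: xgetP => [P _ []|_]; rewrite ?trmx0. Qed.

Lemma orthoproj_kermx_mul m n (A : 'M[R]_(m, n)) : orthoproj (kermx A) *m A = 0.
Proof.
rewrite /orthoproj; case: xgetP => [P _ [_ _ /andP[PA _]]|_]; last exact: mul0mx.
exact/sub_kermxP.
Qed.

Lemma Pperp_orthogonal m1 m2 (A B : 'M[R]_(m1, m2)) :
  A^T *m Pperp A B = 0 /\ A *m (Pperp A B)^T = 0.
Proof.
have AtP : A^T *m orthoproj (kermx A) = 0.
  by rewrite -trmx_orthoproj -trmx_mul orthoproj_kermx_mul trmx0.
have APt : A *m (orthoproj (kermx A^T))^T = 0.
  by rewrite -{1}[A]trmxK -trmx_mul orthoproj_kermx_mul trmx0.
by rewrite /Pperp /SUperp /SVperp !trmx_mul !mulmxA AtP APt !mul0mx.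
Qed.

Lemma gram_expr_add m1 m2 (A C : 'M[R]_(m1, m2)) k :
  A^T *m C = 0 -> A *m C^T = 0 ->
  ((A + C) *m (A + C)^T) ^+ k.+1 = (A *m A^T) ^+ k.+1 + (C *m C^T) ^+ k.+1.
Proof.
move=> AtC ACt; have CAt : C *m A^T = 0 by rewrite -[LHS]trmxK trmx_mul trmxK ACt trmx0.
have CtA : C^T *m A = 0 by rewrite -[LHS]trmxK trmx_mul trmxK AtC trmx0.
rewrite linearD /= mulmxDl !mulmxDr ACt CAt addr0 add0r.
apply: exprDn_annihilating; rewrite -mulmxE mulmxA.
  by rewrite -(mulmxA A) AtC mulmx0 mul0mx.
by rewrite -(mulmxA C) CtA mulmx0 mul0mx.
Qed.

End TL1Additivity.

Theorem lemma4 (R : realType) (m1 m2 : nat) (a : R) (A B : 'M[R]_(m1, m2)) :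
  0 < a ->
  TL1 a (A + Pperp A B) = TL1 a A + TL1 a (Pperp A B).
Proof.
move=> _; set C := Pperp A B; have [AtC ACt] := Pperp_orthogonal A B.
set xs := svals A ++ svals C ++ svals (A + C).
have [q q_interp] := exists_interpolating_poly (0 :: [seq x ^+ 2 | x <- xs])
  (fun y => (a + 1) * Num.sqrt y / (a + Num.sqrt y)).
have q0 : q.[0] = 0 by rewrite q_interp ?mem_head // sqrtr0 mulr0 mul0r.
have q_svals m n (X : 'M[R]_(m, n)) : {subset svals X <= xs} ->
    {in svals X, forall x, q.[x ^+ 2] = (a + 1) * x / (a + x)}.
  move=> X_xs x x_X; rewrite q_interp; last first.
    by rewrite in_cons; apply/orP; right; apply/mapP; exists x => //; exact: X_xs.
  by rewrite sqrtr_sqr ger0_norm //; case: (svalsP X) => _ _ /allP/(_ x x_X).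
rewrite !(TL1_trace_poly q0 (q_svals _ _ _ _)) -?big_split /=;
  try by move=> x; rewrite !mem_cat => ->; rewrite ?orbT.
apply: eq_bigr => -[[|k] _] _ /=; first by rewrite -horner_coef0 q0 !mul0r addr0.
by rewrite -mulrDr -mxtraceD gram_expr_add.
Qed.
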